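(* Let $A$ be a simple type. For every partial surjection $f \colon Q \twoheadrightarrow Q'$ between finite sets one has $\mathrm{Reg}_{Q'}(A) \subseteq \mathrm{Reg}_{Q}(A)$. The resulting diagram of Boolean algebras $\mathrm{Reg}_{(-)}(A) \colon \mathbf{FinPSurj}^{\mathrm{op}} \to \mathbf{BA}$, sending $Q$ to $\mathrm{Reg}_Q(A)$ and a partial surjection $f \colon Q \twoheadrightarrow Q'$ to the inclusion $\mathrm{Reg}_{Q'}(A) \hookrightarrow \mathrm{Reg}_Q(A)$, is directed, and its colimit in the category $\mathbf{BA}$ of Boolean algebras is the Boolean algebra $\mathrm{Reg}(A)$ (in particular $\mathrm{Reg}(A)$ is a Boolean subalgebra of $\wp(\Lambda(A))$).
   Context: Simple types are generated from a base type $o$ by $A \Rightarrow B$. $\Lambda(A)$ denotes the set of closed simply typed $\lambda$-terms of type $A$ modulo $\beta\eta$-conversion. For a finite set $Q$, define $[\![o]\!]_Q = Q$ and $[\![A \Rightarrow B]\!]_Q$ = the set of all functions $[\![A]\!]_Q \to [\![B]\!]_Q$; each $M \in \Lambda(A)$ has its standard interpretation $[\![M]\!]_Q \in [\![A]\!]_Q$ in this finite set-theoretic model. $\mathrm{Reg}_Q(A) = \{\{M \in \Lambda(A) : [\![M]\!]_Q \in F\} : F \subseteq [\![A]\!]_Q\}$ (a Boolean subalgebra of $\wp(\Lambda(A))$), and $\mathrm{Reg}(A) = \bigcup_{Q \text{ finite}} \mathrm{Reg}_Q(A)$. A partial surjection $f \colon Q \twoheadrightarrow Q'$ is a relation $f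 \subseteq Q \times Q'$ that is the graph of a partial function which is surjective onto $Q'$. $\mathbf{FinPSurj}$ is the category of finite sets and partial surjections. *)

From HB Require Import structures.
From mathcomp Require Import all_boot all_order.
From mathcomp Require Import boolp classical_sets.

Set Implicit Arguments.
Unset Strict Implicit.
Unset Printing Implicit Defensive.

Local Open Scope classical_set_scope.

Inductive ty : Type := o : ty | arr : ty -> ty -> ty.

Inductive var : list ty -> ty -> Type :=
| vz : forall G A, var (A :: G) A
| vs : forall G A B, var G A -> var (B :: G) A.

Inductive tm (G : list ty) : ty -> Type :=
| Var : forall A, var G A -> tm G A
| Lam : forall A B, tm (A :: G) B -> tm G (arr A B)
| App : forall A B, tm G (arr A B) -> tm G A -> tm G B.

(** Closed terms of type A.  (Lambda(A) is this modulo beta-eta.) *)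
Definition Lambda (A : ty) : Type := tm nil A.

Fixpoint interp (Q : Type) (A : ty) : Type :=
  match A with
  | o => Q
  | arr A B => interp Q A -> interp Q B
  end.

Fixpoint env (Q : Type) (G : list ty) : Type :=
  match G with
  | nil => unit
  | A :: G => (interp Q A * env Q G)%type
  end.

Fixpoint lookup (Q : Type) G A (v : var G A) : env Q G -> interp Q A :=
  match v in var G A return env Q G -> interp Q A with
  | vz _ _ => fun e => fst e
  | vs _ _ _ v => fun e => lookup v (snd e)
  end.

Fixpoint eval (Q : Type) G A (t : tm G A) : env Q G -> interp Q A :=
  match t in tm _ A return env Q G -> interp Q A with
  | Var _ v => fun e => lookup v e
  | Lam _ _ t => fun e => fun x => eval t (x, e)
  | App _ _ t u => fun e => (eval t e) (eval u e)
  end.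

Definition sem (Q : Type) A (M : Lambda A) : interp Q A := eval M tt.

Definition RegQ (Q : finType) (A : ty) : set (set (Lambda A)) :=
  [set S | exists F : set (interp Q A), S = [set M | F (sem Q M)]].
Arguments RegQ : clear implicits.

Definition Reg (A : ty) : set (set (Lambda A)) :=
  [set S | exists Q : finType, RegQ Q A S].
Arguments Reg : clear implicits.

Definition psurj (Q Q' : finType) (f : Q -> option Q') : Prop :=
  forall q' : Q', exists q : Q, f q = Some q'.

Definition bool_subalg (T : Type) (D : set (set T)) : Prop :=
  [/\ D set0, D setT,
      (forall S1 S2, D S1 -> D S2 -> D (S1 `&` S2)),
      (forall S1 S2, D S1 -> D S2 -> D (S1 `|` S2)) &
      (forall S, D S -> D (~` S))].

(** h restricted to the subalgebra D is a Boolean algebra homomorphism into B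
    (Boolean algebras = mathcomp's complemented distributive lattices with
    top and bottom). *)
Definition BAhom_on (T : Type) (D : set (set T)) (disp : Order.disp_t)
    (B : ctbDistrLatticeType disp) (h : set T -> B) : Prop :=
  [/\ h set0 = Order.bottom, h setT = Order.top,
      (forall S1 S2, D S1 -> D S2 -> h (S1 `&` S2) = Order.meet (h S1) (h S2)),
      (forall S1 S2, D S1 -> D S2 -> h (S1 `|` S2) = Order.join (h S1) (h S2)) &
      (forall S, D S -> h (~` S) = Order.compl (h S))].

(** A partial surjection f : Q -/->> Q' extends to a logical relation between
    [[A]]_Q and [[A]]_Q' which is again a partial surjection at every type, and
    by the fundamental lemma it relates [[M]]_Q to [[M]]_Q' for every closed M.  Hence
    [[M]]_Q' is a function of [[M]]_Q, and {M | [[M]]_Q' in F} is the preimage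
    under [[-]]_Q of the inverse image of F.  Any two finite sets are common
    partial-surjective images of (option Q1 * option Q2), so the Reg_Q(A) form a
    directed family whose union Reg(A) is a Boolean subalgebra; a compatible
    family of homomorphisms on the Reg_Q(A) glues to a unique one on the union. *)
From HB Require Import structures.
From mathcomp Require Import all_boot all_order.
From mathcomp Require Import boolp classical_sets.

Set Implicit Arguments.

Local Open Scope classical_set_scope.

Section LogicalRelation.
Variables (Q Q' : Type) (f : Q -> option Q').

Fixpoint logrel (A : ty) : interp Q A -> interp Q' A -> Prop :=
  match A return interp Q A -> interp Q' A -> Prop with
  | o => fun x y => f x = Some y
  | arr A B => fun g h => forall x y, logrel A x y -> logrel B (g x) (h y)
  end.

Fixpoint env_logrel (G : list ty) : env Q G -> env Q' G -> Prop :=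
  match G return env Q G -> env Q' G -> Prop with
  | nil => fun _ _ => True
  | A :: G => fun e e' => logrel A e.1 e'.1 /\ env_logrel G e.2 e'.2
  end.

Lemma lookup_logrel G A (v : var G A) e e' :
  env_logrel G e e' -> logrel A (lookup v e) (lookup v e').
Proof.
elim: v e e' => [{}G {}A|{}G {}A B v IHv] e e' /=; first by case.
by case=> _; apply: IHv.
Qed.

Lemma eval_logrel G A (t : tm G A) e e' :
  env_logrel G e e' -> logrel A (eval t e) (eval t e').
Proof.
elim: t e e' => [{}G {}A v|{}G {}A B t IHt|{}G {}A B t IHt u IHu] e e' He /=.
- exact: lookup_logrel.
- by move=> x y Hxy; apply: (IHt (x, e) (y, e')).
- exact: (IHt _ _ He _ _ (IHu _ _ He)).
Qed.

Lemma sem_logrel A (M : Lambda A) : logrel A (sem Q M) (sem Q' M).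
Proof. exact: eval_logrel. Qed.

Fixpoint interp_const (q : Q) (A : ty) : interp Q A :=
  match A with o => q | arr _ B => fun _ => interp_const q B end.

Hypothesis f_surj : forall q' : Q', exists q : Q, f q = Some q'.

(* The two halves must be proved together: functionality at [arr A B] uses
   surjectivity at [A], and surjectivity at [arr A B] uses functionality at [A]. *)
Lemma logrel_functional_surjective (q : Q) A :
  (forall x y y', logrel A x y -> logrel A x y' -> y = y') /\
  (forall y, exists x, logrel A x y).
Proof.
elim: A => [|A [funA surjA] B [funB surjB]] /=.
  by split=> [x y y' -> []|]; last exact: f_surj.
split=> [g h h' Hh Hh'|h].
  apply: funext => y; have [x Hxy] := surjA y.
  exact: funB (Hh _ _ Hxy) (Hh' _ _ Hxy).
have /choice [g Hg] : forall x, exists z, forall y, logrel A x y -> logrel B z (h y).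
  move=> x; have [[y Hxy]|no_y] := pselect (exists y, logrel A x y).
    have [z Hz] := surjB (h y); exists z => y' Hxy'.
    by rewrite -(funA _ _ _ Hxy Hxy').
  by exists (interp_const q B) => y Hxy; case: no_y; exists y.
by exists g => x y /Hg.
Qed.

End LogicalRelation.

Lemma interp_subsingleton (Q : Type) : (Q -> False) ->
  forall A (x y : interp Q A), x = y.
Proof.
move=> Q0; elim=> [|A _ B IHB] /= x y; first by case: (Q0 x).
by apply: funext => z; apply: IHB.
Qed.

Lemma RegQ_functional_rel {Q Q' : finType} {A} {R : interp Q A -> interp Q' A -> Prop} :
  (forall x y y', R x y -> R x y' -> y = y') ->
  (forall M : Lambda A, R (sem Q M) (sem Q' M)) ->
  RegQ Q' A `<=` RegQ Q A.
Proof.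
move=> R_fun R_sem _ [F ->]; exists [set x | exists y, R x y /\ F y].
apply/predeqP => M /=; split=> [FM|[y [Ry Fy]]]; first by exists (sem Q' M).
by rewrite (R_fun _ _ _ (R_sem M) Ry).
Qed.

Lemma RegQ_psurj A (Q Q' : finType) (f : Q -> option Q') :
  psurj f -> RegQ Q' A `<=` RegQ Q A.
Proof.
move=> f_surj; have [[q' _]|Q'0] := pselect (exists q' : Q', True).
  have [q _] := f_surj q'.
  have [logrel_fun _] := logrel_functional_surjective f f_surj q A.
  exact: RegQ_functional_rel logrel_fun (sem_logrel f (A:=A)).
(* With Q' empty there is no constant to start the logical relation from, but
   then every [[A]]_Q' is a subsingleton and the total relation will do. *)
apply: (RegQ_functional_rel (R := fun _ _ => True)) => // x y y' _ _.
by apply: interp_subsingleton => q'; apply: Q'0; exists q'.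
Qed.

Lemma psurj_directed (Q1 Q2 : finType) :
  exists (Q : finType) (f1 : Q -> option Q1) (f2 : Q -> option Q2),
    psurj f1 /\ psurj f2.
Proof.
exists (option Q1 * option Q2)%type, fst, snd.
by split=> q; [exists (Some q, None) | exists (None, Some q)].
Qed.

Lemma RegQ_common A (Q1 Q2 : finType) S1 S2 :
  RegQ Q1 A S1 -> RegQ Q2 A S2 -> exists Q : finType, RegQ Q A S1 /\ RegQ Q A S2.
Proof.
move=> RS1 RS2; have [Q [f1 [f2 [f1_surj f2_surj]]]] := psurj_directed Q1 Q2.
by exists Q; split; [apply: RegQ_psurj f1_surj _ RS1 | apply: RegQ_psurj f2_surj _ RS2].
Qed.

Lemma RegQ_bool_subalg A (Q : finType) : bool_subalg (RegQ Q A).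
Proof.
split.
- by exists set0; apply/predeqP.
- by exists setT; apply/predeqP.
- by move=> _ _ [F1 ->] [F2 ->]; exists (F1 `&` F2); apply/predeqP.
- by move=> _ _ [F1 ->] [F2 ->]; exists (F1 `|` F2); apply/predeqP.
- by move=> _ [F ->]; exists (~` F); apply/predeqP.
Qed.

Lemma Reg_bool_subalg A : bool_subalg (Reg A).
Proof.
have RegQ_subalg := @RegQ_bool_subalg A.
split.
- by exists bool; case: (RegQ_subalg bool).
- by exists bool; case: (RegQ_subalg bool).
- move=> S1 S2 [Q1 RS1] [Q2 RS2]; have [Q [RQS1 RQS2]] := RegQ_common RS1 RS2.
  by exists Q; case: (RegQ_subalg Q) => _ _ + _ _; apply.
- move=> S1 S2 [Q1 RS1] [Q2 RS2]; have [Q [RQS1 RQS2]] := RegQ_common RS1 RS2.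
  by exists Q; case: (RegQ_subalg Q) => _ _ _ + _; apply.
- by move=> S [Q RS]; exists Q; case: (RegQ_subalg Q) => _ _ _ _; apply.
Qed.

Section Colimit.
Context {A : ty} {disp : Order.disp_t} {B : ctbDistrLatticeType disp}.
Context {g : forall Q : finType, set (Lambda A) -> B}.
Hypothesis g_hom : forall Q : finType, BAhom_on (RegQ Q A) (g Q).
Hypothesis g_compat : forall (Q Q' : finType) (f : Q -> option Q'), psurj f ->
  forall S, RegQ Q' A S -> g Q S = g Q' S.

Lemma cocone_agree (Q1 Q2 : finType) S :
  RegQ Q1 A S -> RegQ Q2 A S -> g Q1 S = g Q2 S.
Proof.
move=> RS1 RS2; have [Q [f1 [f2 [f1_surj f2_surj]]]] := psurj_directed Q1 Q2.
by rewrite -(g_compat f1_surj RS1) (g_compat f2_surj RS2).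
Qed.

Lemma BAhom_on_Reg (h : set (Lambda A) -> B) :
  (forall (Q : finType) S, RegQ Q A S -> h S = g Q S) -> BAhom_on (Reg A) h.
Proof.
move=> h_g; have [RQ0 RQT RQI RQU RQC] := RegQ_bool_subalg A bool.
split.
- by case: (g_hom bool) => <- _ _ _ _; apply: h_g RQ0.
- by case: (g_hom bool) => _ <- _ _ _; apply: h_g RQT.
- move=> S1 S2 [Q1 RS1] [Q2 RS2]; have [Q [RQS1 RQS2]] := RegQ_common RS1 RS2.
  have [_ _ RQI' _ _] := RegQ_bool_subalg A Q; have [_ _ gI _ _] := g_hom Q.
  by rewrite (h_g Q _ (RQI' _ _ RQS1 RQS2)) (h_g Q _ RQS1) (h_g Q _ RQS2) gI.
- move=> S1 S2 [Q1 RS1] [Q2 RS2]; have [Q [RQS1 RQS2]] := RegQ_common RS1 RS2.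
  have [_ _ _ RQU' _] := RegQ_bool_subalg A Q; have [_ _ _ gU _] := g_hom Q.
  by rewrite (h_g Q _ (RQU' _ _ RQS1 RQS2)) (h_g Q _ RQS1) (h_g Q _ RQS2) gU.
- move=> S [Q RS].
  have [_ _ _ _ RQC'] := RegQ_bool_subalg A Q; have [_ _ _ _ gC] := g_hom Q.
  by rewrite (h_g Q _ (RQC' _ RS)) (h_g Q _ RS) gC.
Qed.

Lemma cocone_glue : exists h : set (Lambda A) -> B,
  forall (Q : finType) S, RegQ Q A S -> h S = g Q S.
Proof.
have /choice [h h_g] : forall S, exists b : B, forall Q : finType, RegQ Q A S -> b = g Q S.
  move=> S; have [[Q0 RS0]|notReg] := pselect (exists Q : finType, RegQ Q A S).
    by exists (g Q0 S) => Q RS; apply: cocone_agree.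
  by exists Order.bottom => Q RS; case: notReg; exists Q.
by exists h => Q S /h_g.
Qed.

End Colimit.

Theorem theoremA (A : ty) :
  (* functoriality: a partial surjection Q -/->> Q' gives Reg_Q'(A) <= Reg_Q(A) *)
  (forall (Q Q' : finType) (f : Q -> option Q'), psurj f -> RegQ Q' A `<=` RegQ Q A)
  /\
  (* directedness of the indexing diagram FinPSurj^op *)
  (forall Q1 Q2 : finType, exists (Q : finType) (f1 : Q -> option Q1) (f2 : Q -> option Q2),
       psurj f1 /\ psurj f2)
  /\
  (* Reg(A) is a Boolean subalgebra of P(Lambda(A)) *)
  bool_subalg (Reg A)
  /\
  (* the inclusions Reg_Q(A) -> Reg(A) form a cocone *)
  (forall Q : finType, RegQ Q A `<=` Reg A)
  /\
  (* ... which is a colimit in BA: universal property *)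
  (forall (disp : Order.disp_t) (B : ctbDistrLatticeType disp)
          (g : forall Q : finType, set (Lambda A) -> B),
     (forall Q : finType, BAhom_on (RegQ Q A) (g Q)) ->
     (forall (Q Q' : finType) (f : Q -> option Q'), psurj f ->
        forall S, RegQ Q' A S -> g Q S = g Q' S) ->
     (exists h : set (Lambda A) -> B,
        BAhom_on (Reg A) h /\
        forall (Q : finType) S, RegQ Q A S -> h S = g Q S)
     /\
     (forall h1 h2 : set (Lambda A) -> B,
        BAhom_on (Reg A) h1 -> BAhom_on (Reg A) h2 ->
        (forall (Q : finType) S, RegQ Q A S -> h1 S = g Q S) ->
        (forall (Q : finType) S, RegQ Q A S -> h2 S = g Q S) ->
        forall S, Reg A S -> h1 S = h2 S)).
Proof.
split; first exact: RegQ_psurj.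
split; first exact: psurj_directed.
split; first exact: Reg_bool_subalg.
split; first by move=> Q S RS; exists Q.
move=> disp B g g_hom g_compat; split.
  have [h h_g] := cocone_glue g_compat.
  by exists h; split; first exact: BAhom_on_Reg.
by move=> h1 h2 _ _ h1_g h2_g S [Q RS]; rewrite (h1_g Q S RS) (h2_g Q S RS).
Qed.
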